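(* Fix an integer $c\ge1$, let $A=\mathbb{K}[x_ix_j: i,j\in\mathbb{N},\ i\le j\le i+c]\subseteq\mathbb{K}[x_i: i\in\mathbb{N}]$, and let $\varphi:\mathbb{K}[x_{i,j}: i\in[c+1], j\in\mathbb{N}]\to A$ be the surjective $\mathbb{K}$-algebra homomorphism with $x_{i,j}\mapsto x_jx_{i+j-1}$. Then the presentation ideal $I=\ker\varphi$ is finitely generated up to shifting by quadrics, i.e. there is a finite set $F$ of quadratic polynomials in $I$ such that $\{\operatorname{sh}_k(f): f\in F, k\in\mathbb{N}_0\}$ generates $I$.
   Context: $\mathbb{K}$ is a field; $\operatorname{sh}_k$ is the ring endomorphism of $\mathbb{K}[x_{i,j}: i\in[c+1],j\in\mathbb{N}]$ with $x_{i,j}\mapsto x_{i,j+k}$ (so that $\varphi$ commutes with the shift $x_i\mapsto x_{i+k}$). *)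

From HB Require Import structures.
From mathcomp Require Import all_boot all_algebra.
From mathcomp Require Import finmap.
From mathcomp.multinomials Require Import monalg.

Set Implicit Arguments.
Unset Strict Implicit.
Unset Printing Implicit Defensive.

Import GRing.Theory.
Local Open Scope ring_scope.

Definition polyR (K : fieldType) (I : choiceType) := {malg K[{cmonom I}]}.

Definition var (K : fieldType) (I : choiceType) (i : I) : polyR K I :=
  << ucm i >>.

Definition subst (K : fieldType) (I J : choiceType) (v : I -> polyR K J)
    (g : polyR K I) : polyR K J :=
  \sum_(m <- msupp g) g@_m *: \prod_(i <- finsupp m) v i ^+ m i.

(* Source variables x_{i,j}, i in [c+1], j in N, indexed 0-based:
   (i, j) : 'I_(c+1) * nat stands for x_{i+1, j+1}. Target variables x_j,
   j in N, 0-based: j : nat stands for x_{j+1}. *)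
Definition src (K : fieldType) (c : nat) := polyR K (prod 'I_c.+1 nat).
Definition tgt (K : fieldType) := polyR K nat.

(* phi : x_{i,j} |-> x_j x_{i+j-1}  (1-based), i.e. (0-based)
   (i, j) |-> x_j * x_{i+j}. Its image is A; we view it as a map into the
   full polynomial ring K[x_i], which has the same kernel. *)
Definition phi (K : fieldType) (c : nat) (g : src K c) : tgt K :=
  subst (fun p : 'I_c.+1 * nat => var K p.2 * var K (p.1 + p.2)%N) g.

Definition sh (K : fieldType) (c : nat) (k : nat) (g : src K c) : src K c :=
  subst (fun p : 'I_c.+1 * nat => var K (p.1, (p.2 + k)%N)) g.

Definition is_quadric (K : fieldType) (I : choiceType) (f : polyR K I) :=
  forall m, m \in msupp f -> mdeg m = 2%N.

Definition in_ideal_gen (K : fieldType) (I : choiceType)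
    (S : polyR K I -> Prop) (g : polyR K I) :=
  exists s : seq (polyR K I * polyR K I),
    (forall p, p \in s -> S p.2) /\ g = \sum_(p <- s) p.1 * p.2.

From HB Require Import structures.
From mathcomp Require Import all_boot all_algebra.
From mathcomp Require Import finmap.
From mathcomp.multinomials Require Import monalg.
From mathcomp Require Import zify.

(* Read the variable x_{i,j}, coded as (i, j) : 'I_c.+1 * nat, as an edge joining
   the vertices j and i + j of nat: phi sends a monomial, i.e. a multiset of
   edges, to the product of their endpoints.  Modulo the ideal generated by the
   shifts of the quadrics in [gens], every monomial is congruent to a normal form
   that depends only on its endpoints: sort them as v1 <= v2 <= ... and pair them
   up consecutively.  Indeed, the edge at the smallest endpoint v1 ends at some
   a <= v1 + c; if a <> v2 then v2 < a, and the edge {v2, b} together with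
   {v1, a} can be exchanged for {v1, v2} and {a, b} by one quadric whose edges
   all start in [v1, v1 + c], i.e. a shift of an element of [gens].  The K-linear
   map [normal_lift] sending each monomial of the target to its normal form thus
   satisfies g = normal_lift (phi g) modulo the ideal, so phi g = 0 puts g in
   the ideal. *)

Set Implicit Arguments.
Unset Strict Implicit.
Unset Printing Implicit Defensive.

Import GRing.Theory.
Local Open Scope ring_scope.

Section SeqMonomials.
Variables (K : fieldType) (I : choiceType).

Definition cm_of_seq (l : seq I) : cmonom I := \big[@mulcm I/@onecm I]_(i <- l) ucm i.

Definition seq_of_cm (m : cmonom I) : seq I :=
  flatten [seq nseq (m i) i | i <- finsupp m].

Definition mono (l : seq I) : polyR K I := \prod_(i <- l) var K i.

Lemma cm_of_seqE l i : cm_of_seq l i = count_mem i l.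
Proof.
rewrite /cm_of_seq; elim: l => [|j l IHl]; first by rewrite big_nil onecmE.
by rewrite big_cons mulcmE ucmE IHl.
Qed.

Lemma cm_of_seqK : cancel seq_of_cm cm_of_seq.
Proof.
move=> m; apply/eqP/cmP => i; rewrite cm_of_seqE count_flatten sumnE !big_map.
under eq_bigr do rewrite count_nseq mulnbl.
rewrite -big_mkcond -big_filter; have [im | im] := boolP (i \in finsupp m).
  by rewrite filter_pred1_uniq ?fset_uniq // big_seq1.
rewrite big_filter big1_seq => [|j /andP [/eqP -> iin]]; last by rewrite iin in im.
by apply/esym/eqP; rewrite -[_ == _]negbK cmE_neq0.
Qed.

Lemma perm_seq_of_cm l : perm_eq (seq_of_cm (cm_of_seq l)) l.
Proof. by apply/allP => i _; apply/eqP; rewrite -!cm_of_seqE cm_of_seqK. Qed.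

Lemma mdeg_cm_of_seq l : mdeg (cm_of_seq l) = size l.
Proof.
rewrite /cm_of_seq; elim: l => [|i l IHl]; first by rewrite big_nil mdeg1.
by rewrite big_cons (mdegM (ucm i)) mdegU IHl.
Qed.

Lemma monoE l : mono l = << cm_of_seq l >> :> polyR K I.
Proof.
rewrite /mono /cm_of_seq; elim: l => [|i l IHl]; first by rewrite !big_nil.
(* [mmul] and [mulcm] agree only up to conversion, where [done] diverges. *)
rewrite !big_cons IHl /var malgM_def fgmulUU mulr1; reflexivity.
Qed.

Lemma monom_seq_of_cm (m : cmonom I) : << m >> = mono (seq_of_cm m).
Proof. by rewrite monoE cm_of_seqK. Qed.

Lemma mono_cat l1 l2 : mono (l1 ++ l2) = mono l1 * mono l2.
Proof. exact: big_cat. Qed.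

Lemma mono_cons i l : mono (i :: l) = var K i * mono l.
Proof. exact: big_cons. Qed.

Lemma perm_mono l1 l2 : perm_eq l1 l2 -> mono l1 = mono l2.
Proof. exact: perm_big. Qed.

End SeqMonomials.

Section Substitution.
Variables (K : fieldType) (I J : choiceType) (v : I -> polyR K J).
Local Open Scope fset_scope.

Definition monom_eval (m : cmonom I) : polyR K J := \prod_(i <- finsupp m) v i ^+ m i.

Lemma monom_evalEw (m : cmonom I) (d : {fset I}) : finsupp m `<=` d ->
  monom_eval m = \prod_(i <- d) v i ^+ m i.
Proof.
move=> sub; rewrite /monom_eval (big_fset_incl _ sub) // => i _.
by rewrite -cmE_neq0 negbK => /eqP ->; rewrite expr0.
Qed.

Lemma monom_eval_mmorph : mmorphism monom_eval.
Proof.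
split; last by rewrite /monom_eval mdom1 big_seq_fset0.
move=> m1 m2; rewrite !(@monom_evalEw _ (finsupp m1 `|` finsupp m2)) ?mdomD //;
  rewrite ?fsubsetUl ?fsubsetUr //.
by rewrite -big_split; apply: eq_bigr => i _; rewrite cmM exprD.
Qed.

HB.instance Definition _ :=
  isMultiplicative.Build (cmonom I) (polyR K J) monom_eval monom_eval_mmorph.

Lemma substE : subst v =1 mmap (@malgC (cmonom J) K) monom_eval.
Proof. by move=> g; apply: eq_bigr => m _; rewrite mul_malgC. Qed.

Lemma subst_is_additive : additive (subst v).
Proof. by move=> g h; rewrite !substE raddfB. Qed.

Lemma subst_is_multiplicative : multiplicative (subst v).
Proof. by split => [g h|]; rewrite !substE (rmorphM, rmorph1). Qed.

HB.instance Definition _ := GRing.isAdditive.Build _ _ (subst v) subst_is_additive.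
HB.instance Definition _ :=
  GRing.isMultiplicative.Build _ _ (subst v) subst_is_multiplicative.

Lemma subst_var i : subst v (var K i) = v i.
Proof.
by rewrite substE mmapU /monom_eval mdomU big_seq_fset1 cmUU expr1 mul_malgC scale1r.
Qed.

Lemma substC a : subst v a%:MP = a%:MP.
Proof. by rewrite substE mmapC. Qed.

End Substitution.

Lemma monalgU_malgC (K : fieldType) (I : choiceType) (a : K) (m : cmonom I) :
  << a *g m >> = a%:MP * << m >> :> polyR K I.
Proof. by rewrite malgM_def fgmulUU mulr1 (mul1m m). Qed.

Lemma polyR_rmorph_ext (K : fieldType) (I : choiceType) (R : ringType)
    (f g : {rmorphism polyR K I -> R}) :
  (forall a, f a%:MP = g a%:MP) -> (forall i, f (var K i) = g (var K i)) -> f =1 g.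
Proof.
move=> eqC eqX p; rewrite (monalgE p) !rmorph_sum; apply: eq_bigr => m _.
rewrite monalgU_malgC (monom_seq_of_cm K m) !rmorphM eqC /mono !rmorph_prod.
by congr (_ * _); apply: eq_bigr => i _; apply: eqX.
Qed.

Lemma eq_subst (K : fieldType) (I J : choiceType) (v w : I -> polyR K J) :
  v =1 w -> subst v =1 subst w.
Proof.
move=> eq_vw; apply: (polyR_rmorph_ext (f := subst v) (g := subst w)) => [a|i] /=.
  by rewrite !substC.
by rewrite !subst_var; apply: eq_vw.
Qed.

Lemma subst_comp (K : fieldType) (I J L : choiceType) (v : J -> polyR K L)
    (w : I -> polyR K J) (g : polyR K I) :
  subst v (subst w g) = subst (fun i => subst v (w i)) g.
Proof.
apply: (polyR_rmorph_ext (f := subst v \o subst w)) => [a|i] /=.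
  by rewrite !substC.
by rewrite !subst_var.
Qed.

Section Ideal.
Variables (K : fieldType) (I : choiceType) (S : polyR K I -> Prop).

Lemma ideal_gen0 : in_ideal_gen S 0.
Proof. by exists [::]; rewrite big_nil. Qed.

Lemma ideal_genD a b : in_ideal_gen S a -> in_ideal_gen S b -> in_ideal_gen S (a + b).
Proof.
move=> [s [Ss ->]] [t [St ->]]; exists (s ++ t); rewrite big_cat; split => // p.
by rewrite mem_cat => /orP [/Ss | /St].
Qed.

Lemma ideal_genMl a b : in_ideal_gen S b -> in_ideal_gen S (a * b).
Proof.
move=> [s [Ss ->]]; exists [seq (a * p.1, p.2) | p <- s]; split.
  by move=> q /mapP [p ps ->]; apply: (Ss p).
by rewrite big_map mulr_sumr; apply: eq_bigr => p _; rewrite mulrA.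
Qed.

Lemma mem_ideal_gen h : S h -> in_ideal_gen S h.
Proof.
by move=> Sh; exists [:: (1, h)]; rewrite big_seq1 mul1r; split => // p /[!inE] /eqP ->.
Qed.

Lemma ideal_gen_sum (T : Type) (r : seq T) (F : T -> polyR K I) :
  (forall x, in_ideal_gen S (F x)) -> in_ideal_gen S (\sum_(x <- r) F x).
Proof.
move=> SF; elim: r => [|x r IHr]; first by rewrite big_nil; apply: ideal_gen0.
by rewrite big_cons; apply: ideal_genD.
Qed.

Lemma ideal_gen_subr_trans a b d :
  in_ideal_gen S (a - b) -> in_ideal_gen S (b - d) -> in_ideal_gen S (a - d).
Proof. by move=> Sab Sbd; rewrite -[a](subrK b) -addrA; apply: ideal_genD. Qed.

Lemma rmorph_ideal_gen_eq0 (R : ringType) (f : {rmorphism polyR K I -> R}) g :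
  (forall h, S h -> f h = 0) -> in_ideal_gen S g -> f g = 0.
Proof.
move=> fS [s [Ss ->]]; rewrite rmorph_sum big1_seq // => p /andP [_ /Ss Sp].
by rewrite (rmorphM f) (fS _ Sp) mulr0.
Qed.

End Ideal.

Lemma is_quadric_mono_sub (K : fieldType) (I : choiceType) (s t : seq I) :
  size s = 2%N -> size t = 2%N -> is_quadric (mono K s - mono K t).
Proof.
move=> s2 t2 m /(fsubsetP (msuppB_le _ _)) /fsetUP [];
  by rewrite monoE msuppU1 => /fset1P ->; rewrite mdeg_cm_of_seq.
Qed.

Section Edges.
Variables (K : fieldType) (c : nat).
Local Notation E := ('I_c.+1 * nat)%type.

HB.instance Definition _ :=
  GRing.RMorphism.copy (@phi K c) (subst (fun e : E => var K e.2 * var K (e.1 + e.2)%N)).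

HB.instance Definition _ k :=
  GRing.RMorphism.copy (@sh K c k) (subst (fun e : E => var K (e.1, (e.2 + k)%N))).

Definition endpoints (s : seq E) : seq nat :=
  flatten [seq [:: e.2; (e.1 + e.2)%N] | e : E <- s].

Definition shift_edge k (e : E) : E := (e.1, (e.2 + k)%N).

Lemma endpoints_cons e s :
  endpoints (e :: s) = [:: e.2, (e.1 + e.2)%N & endpoints s].
Proof. by []. Qed.

Lemma size_endpoints s : size (endpoints s) = (size s).*2.
Proof. by elim: s => [|e s IHs] //; rewrite endpoints_cons /= IHs doubleS. Qed.

Lemma endpoints_cat s t : endpoints (s ++ t) = endpoints s ++ endpoints t.
Proof. by rewrite /endpoints map_cat flatten_cat. Qed.

Lemma perm_endpoints s t : perm_eq s t -> perm_eq (endpoints s) (endpoints t).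
Proof. by move=> st; apply/perm_flatten/perm_map. Qed.

Lemma endpoints_rem e s : e \in s ->
  perm_eq (endpoints s) [:: e.2, (e.1 + e.2)%N & endpoints (rem e s)].
Proof. by move=> es; apply: (perm_endpoints (perm_to_rem es)). Qed.

Lemma endpoints_shift k s :
  endpoints (map (shift_edge k) s) = map (addn^~ k) (endpoints s).
Proof.
rewrite /endpoints map_flatten -!map_comp; congr flatten.
by apply: eq_map => e /=; rewrite addnA.
Qed.

Lemma phi_var (e : E) : phi (var K e) = var K e.2 * var K (e.1 + e.2)%N.
Proof. exact: subst_var. Qed.

Lemma sh_var k (e : E) : sh k (var K e) = var K (shift_edge k e).
Proof. exact: subst_var. Qed.

Lemma phi_mono s : phi (mono K s) = mono K (endpoints s).
Proof.
rewrite /mono rmorph_prod; elim: s => [|e s IHs]; first by rewrite !big_nil.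
by rewrite big_cons IHs /= phi_var endpoints_cons !big_cons mulrA.
Qed.

Lemma sh_mono k s : sh k (mono K s) = mono K (map (shift_edge k) s).
Proof.
by rewrite /mono rmorph_prod big_map; apply: eq_bigr => e _; rewrite /= sh_var.
Qed.

Lemma phi_sh k (g : src K c) :
  phi (sh k g) = subst (fun j => var K (j + k)%N) (phi g).
Proof.
rewrite /phi /sh !subst_comp; apply: eq_subst => e /=.
rewrite [LHS]subst_var [RHS]rmorphM /= addnA.
by congr (_ * _); symmetry; apply: subst_var.
Qed.

End Edges.

Lemma perm_swap2 (T : eqType) (x y : T) s : perm_eq [:: x, y & s] [:: y, x & s].
Proof. by rewrite -[_ :: _]/([:: x] ++ [:: y] ++ s) perm_catCA. Qed.

Section Generators.
Variables (K : fieldType) (c : nat).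
Local Notation E := ('I_c.+1 * nat)%type.

Definition window : seq E := [seq (i, j) | i <- enum 'I_c.+1, j <- iota 0 c.+1].

Definition window_pairs : seq (seq E) := [seq [:: e; e'] | e <- window, e' <- window].

Definition gens : seq (src K c) :=
  [seq mono K p.1 - mono K p.2 | p <- [seq (s, t) | s <- window_pairs, t <- window_pairs]
     & perm_eq (endpoints p.1) (endpoints p.2)].

Definition shifted_gen (h : src K c) : Prop := exists f k, f \in gens /\ h = sh k f.

Lemma mem_window (e : E) : (e.2 <= c)%N -> e \in window.
Proof.
by case: e => i j /= jc; apply/allpairsP; exists (i, j); rewrite mem_enum mem_iota.
Qed.

Lemma mem_window_pairs (u : seq E) :
  size u = 2%N -> all (fun e : E => e.2 <= c)%N u -> u \in window_pairs.
Proof.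
case: u => [|e [|e' []]] // _ /and3P [ec e'c _].
by apply: allpairs_f; apply: mem_window.
Qed.

Lemma mem_gens s t : s \in window_pairs -> t \in window_pairs ->
  perm_eq (endpoints s) (endpoints t) -> mono K s - mono K t \in gens.
Proof.
move=> sw tw st; apply/mapP; exists (s, t) => //.
by rewrite mem_filter st; apply/allpairsP; exists (s, t).
Qed.

Lemma gensP f : f \in gens -> exists s t, [/\ size s = 2%N, size t = 2%N,
  perm_eq (endpoints s) (endpoints t) & f = mono K s - mono K t].
Proof.
move=> /mapP [[s t]]; rewrite mem_filter => /andP [/= st].
move=> /allpairsP [[s' t'] [/= sw tw [eq_s eq_t]]] ->; subst s' t'.
have size_pair u : u \in window_pairs -> size u = 2%N by move=> /allpairsP [[e e'] [_ _ ->]].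
by exists s, t; split => //; apply: size_pair.
Qed.

Lemma gens_quadric f : f \in gens -> is_quadric f.
Proof. by move=> /gensP [s [t [s2 t2 _ ->]]]; apply: is_quadric_mono_sub. Qed.

Lemma phi_gens f : f \in gens -> phi f = 0.
Proof.
move=> /gensP [s [t [_ _ st ->]]].
by rewrite rmorphB /= !phi_mono (perm_mono K st) subrr.
Qed.

Lemma phi_sh_gens k f : f \in gens -> phi (sh k f) = 0.
Proof. by move=> fF; rewrite phi_sh phi_gens // rmorph0. Qed.

Lemma shifted_gen_window (s t : seq E) k : size s = 2%N -> size t = 2%N ->
  all (fun e : E => k <= e.2 <= k + c)%N (s ++ t) ->
  perm_eq (endpoints s) (endpoints t) -> shifted_gen (mono K s - mono K t).
Proof.
move=> s2 t2; rewrite all_cat => /andP [win_s win_t] st.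
pose low (e : E) : E := (e.1, e.2 - k)%N.
have lowK u : all (fun e : E => k <= e.2 <= k + c)%N u ->
    map (shift_edge k) (map low u) = u.
  move=> /allP win; rewrite -map_comp map_id_in // => e /win /andP [ke _].
  by rewrite /= /shift_edge subnK //; case: e {ke}.
have low_window u : size u = 2%N -> all (fun e : E => k <= e.2 <= k + c)%N u ->
    map low u \in window_pairs.
  move=> u2 win; apply: mem_window_pairs; first by rewrite size_map.
  by rewrite all_map; apply: sub_all win => e /andP [ke ekc] /=; lia.
exists (mono K (map low s) - mono K (map low t)), k; split.
  apply: mem_gens; rewrite ?low_window //.
  by apply: (perm_map_inj (@addIn k)); rewrite -!endpoints_shift !lowK.
by rewrite rmorphB /= !sh_mono !lowK.
Qed.

(* The length [inord _] is junk unless |a - b| <= c. *)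
Definition edge (a b : nat) : E := (inord (maxn a b - minn a b), minn a b).

Lemma edge_endpoints (e : E) : edge e.2 (e.1 + e.2) = e.
Proof.
case: e => i j; rewrite /edge /= (minn_idPl (leq_addl i j)) (maxn_idPr (leq_addl i j)).
by rewrite addnK inord_val.
Qed.

Lemma endpoints_edge a b s : (maxn a b - minn a b <= c)%N ->
  perm_eq (endpoints (edge a b :: s)) [:: a, b & endpoints s].
Proof.
move=> ab; rewrite endpoints_cons /= inordK ?ltnS //.
have [le_ab | lt_ba] := leqP a b; first by rewrite subnK.
by rewrite subnK ?(ltnW lt_ba) // perm_swap2.
Qed.

Definition exchange (e1 e2 : E) : seq E :=
  [:: edge e1.2 e2.2; edge (e1.1 + e1.2) (e2.1 + e2.2)].

Lemma perm_endpoints_exchange (e1 e2 : E) : (e1.2 <= e2.2 < e1.1 + e1.2)%N ->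
  perm_eq (endpoints [:: e1; e2]) (endpoints (exchange e1 e2)).
Proof.
move=> /andP [le12 lt2a]; have e1c := ltn_ord e1.1; have e2c := ltn_ord e2.1.
have low : (maxn e1.2 e2.2 - minn e1.2 e2.2 <= c)%N by lia.
have high : (maxn (e1.1 + e1.2) (e2.1 + e2.2) - minn (e1.1 + e1.2) (e2.1 + e2.2) <= c)%N.
  by lia.
rewrite perm_sym (permPl (endpoints_edge _ low)) perm_sym endpoints_cons perm_cons.
rewrite endpoints_cons (permPl (perm_swap2 _ _ _)) perm_cons perm_sym.
exact: endpoints_edge.
Qed.

Lemma shifted_gen_exchange (e1 e2 : E) : (e1.2 <= e2.2 < e1.1 + e1.2)%N ->
  shifted_gen (mono K [:: e1; e2] - mono K (exchange e1 e2)).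
Proof.
move=> e12; apply: (@shifted_gen_window _ _ e1.2) => //.
  by move: e12 (ltn_ord e1.1) (ltn_ord e2.1); rewrite /= !leqnn; lia.
exact: perm_endpoints_exchange.
Qed.

End Generators.

Arguments edge {c} a b.

Section NormalForm.
Variables (K : fieldType) (c : nat).
Local Notation E := ('I_c.+1 * nat)%type.
Local Notation ideal := (in_ideal_gen (@shifted_gen K c)).

Lemma mem_endpoints (e : E) s : e \in s -> e.2 \in endpoints s.
Proof.
by move=> es; apply/flattenP; exists [:: e.2; e.1 + e.2]%N; rewrite ?mem_head ?(map_f _ es).
Qed.

Lemma lowest_edge (s : seq E) v : v \in endpoints s ->
  {in endpoints s, forall x, v <= x}%N -> exists2 e, e \in s & e.2 = v.
Proof.
move=> /flattenP [_ /mapP [e es ->] ve] vmin; exists e => //.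
move: ve (vmin _ (mem_endpoints es)); rewrite !inE => /orP [] /eqP -> // le.
by apply/eqP; rewrite eqn_leq leq_addl le.
Qed.

Lemma ideal_mono_catr (p q r : seq E) :
  shifted_gen (mono K p - mono K q) -> ideal (mono K (p ++ r) - mono K (q ++ r)).
Proof.
by move=> pq; rewrite !mono_cat -mulrBl mulrC; apply/ideal_genMl/mem_ideal_gen.
Qed.

Lemma mono_exchange (s : seq E) e1 e2 : e1 \in s -> e2 \in rem e1 s ->
  (e1.2 <= e2.2 < e1.1 + e1.2)%N ->
  let s' := exchange e1 e2 ++ rem e2 (rem e1 s) in
  perm_eq (endpoints s) (endpoints s') /\ ideal (mono K s - mono K s').
Proof.
move=> e1s e2s e12 s'.
have s_perm : perm_eq s ([:: e1; e2] ++ rem e2 (rem e1 s)).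
  by apply: perm_trans (perm_to_rem e1s) _; rewrite perm_cons perm_to_rem.
rewrite (perm_mono K s_perm); split; last exact/ideal_mono_catr/shifted_gen_exchange.
apply: perm_trans (perm_endpoints s_perm) _.
by rewrite !endpoints_cat perm_cat2r perm_endpoints_exchange.
Qed.

Lemma mono_lowest_pair (s : seq E) v1 v2 rest :
  perm_eq (endpoints s) [:: v1, v2 & rest] -> (v1 <= v2)%N -> all (leq v2) rest ->
  exists2 s1, perm_eq (endpoints s1) rest & ideal (mono K s - mono K (edge v1 v2 :: s1)).
Proof.
move=> s_v v12 v2_rest.
have v2_min x : x \in v2 :: rest -> (v2 <= x)%N.
  by rewrite inE => /predU1P [-> // | /(allP v2_rest)].
have [e1 e1s e1v1] : exists2 e1, e1 \in s & e1.2 = v1.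
  apply: lowest_edge => [|x]; rewrite (perm_mem s_v) ?mem_head // inE.
  by move=> /predU1P [-> // | /v2_min]; apply: leq_trans.
have s'_v : perm_eq ((e1.1 + e1.2)%N :: endpoints (rem e1 s)) (v2 :: rest).
  move: (endpoints_rem e1s); rewrite perm_sym => /perm_trans /(_ s_v).
  by rewrite {1}e1v1 perm_cons.
have [a_v2 | a_ne_v2] := eqVneq (e1.1 + e1.2)%N v2.
  exists (rem e1 s); first by rewrite -(perm_cons v2) -{1}a_v2.
  rewrite -e1v1 -a_v2 edge_endpoints (perm_mono K (perm_to_rem e1s)) subrr.
  exact: ideal_gen0.
have v2_lt_a : (v2 < e1.1 + e1.2)%N.
  have : (e1.1 + e1.2)%N \in v2 :: rest by rewrite -(perm_mem s'_v) mem_head.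
  by rewrite ltn_neqAle eq_sym a_ne_v2 => /v2_min.
have [e2 e2s e2v2] : exists2 e2, e2 \in rem e1 s & e2.2 = v2.
  apply: lowest_edge => [|x xs].
    have : v2 \in (e1.1 + e1.2)%N :: endpoints (rem e1 s) by rewrite (perm_mem s'_v) mem_head.
    by rewrite inE eq_sym (negbTE a_ne_v2).
  by apply: v2_min; rewrite -(perm_mem s'_v) inE xs orbT.
have e12 : (e1.2 <= e2.2 < e1.1 + e1.2)%N by rewrite e2v2 v2_lt_a e1v1 v12.
have [ends_s ideal_s] := mono_exchange e1s e2s e12.
exists (edge (e1.1 + e1.2) (e2.1 + e2.2) :: rem e2 (rem e1 s)); last first.
  by rewrite -e1v1 -e2v2; exact: ideal_s.
have low : (maxn e1.2 e2.2 - minn e1.2 e2.2 <= c)%N by move: e12 (ltn_ord e1.1); lia.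
have := perm_trans ends_s (endpoints_edge _ low); rewrite e1v1 e2v2 => ends_s1.
by rewrite -(perm_cons v2) -(perm_cons v1) perm_sym -(permPl s_v).
Qed.

Fixpoint pair_up (l : seq nat) : seq E :=
  if l is a :: b :: r then edge a b :: pair_up r else [::].

Lemma mono_normal_form (s : seq E) :
  ideal (mono K s - mono K (pair_up (sort leq (endpoints s)))).
Proof.
move: {2}(size s) (erefl (size s)) => n; elim: n s => [|n IHn] s size_s.
  by rewrite (size0nil size_s) subrr; apply: ideal_gen0.
have size_l := size_sort leq (endpoints s); rewrite size_endpoints size_s in size_l.
have sorted_l := sort_sorted leq_total (endpoints s).
have perm_l := permEl (perm_sort leq (endpoints s)); rewrite perm_sym in perm_l.
case: (sort leq (endpoints s)) size_l sorted_l perm_l => [|v1 [|v2 rest]] //=.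
move=> size_rest /andP [v12 path_rest] perm_l.
have v2_rest := order_path_min leq_trans path_rest.
have [s1 s1_rest ideal_s] := mono_lowest_pair perm_l v12 v2_rest.
have size_s1 : size s1 = n.
  by move: size_rest; rewrite -(perm_size s1_rest) size_endpoints; lia.
have sort_s1 : sort leq (endpoints s1) = rest.
  rewrite (perm_sortP leq_total leq_trans anti_leq _ _ s1_rest).
  by apply: sorted_sort; [exact: leq_trans | exact: path_sorted path_rest].
apply: ideal_gen_subr_trans ideal_s _; rewrite !mono_cons -mulrBr.
by apply: ideal_genMl; rewrite -sort_s1; apply: IHn.
Qed.

Definition nf_monom (mu : cmonom nat) : src K c :=
  mono K (pair_up (sort leq (seq_of_cm mu))).

Definition normal_lift : tgt K -> src K c := mmap (@malgC (cmonom E) K) nf_monom.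

HB.instance Definition _ :=
  GRing.Additive.copy normal_lift (mmap (@malgC (cmonom E) K) nf_monom).

Lemma normal_lift_mono (a : K) (l : seq nat) :
  normal_lift (a%:MP * mono K l) = a%:MP * mono K (pair_up (sort leq l)).
Proof.
rewrite monoE -monalgU_malgC /normal_lift mmapU /nf_monom.
by rewrite (perm_sortP leq_total leq_trans anti_leq _ _ (perm_seq_of_cm l)).
Qed.

Lemma sub_normal_lift_in_ideal (g : src K c) : ideal (g - normal_lift (phi g)).
Proof.
rewrite (monalgE g) rmorph_sum [normal_lift _]raddf_sum -sumrB.
apply: ideal_gen_sum => m.
rewrite monalgU_malgC (monom_seq_of_cm K m) rmorphM /= phi_mono {1}/phi substC.
by rewrite normal_lift_mono -mulrBr; apply/ideal_genMl/mono_normal_form.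
Qed.

End NormalForm.

Theorem proposition6p10 (K : fieldType) (c : nat) (hc : (1 <= c)%N) :
  exists F : seq (src K c),
    (forall f, f \in F -> is_quadric f /\ phi f = 0) /\
    (forall g : src K c,
        phi g = 0 <->
        in_ideal_gen (fun h => exists f k, f \in F /\ h = sh k f) g).
Proof.
exists (gens K c); split.
  by move=> f fF; split; [exact: gens_quadric | exact: phi_gens].
move=> g; split => [phi_g0 | g_ideal].
  by have := sub_normal_lift_in_ideal g; rewrite phi_g0 raddf0 subr0.
by apply: (rmorph_ideal_gen_eq0 _ g_ideal) => _ [f [k [fF ->]]]; apply: phi_sh_gens.
Qed.
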